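(* Let $p$ be a prime and $q=p^2$. Let $1\le s\le q-1$ and let $L\subseteq\{0,1,\ldots,q-1\}$ be an interval in the modulo $q$ sense of size $s$. If $\mathcal{F}\subseteq2^{[n]}$ is a $q$-modular $L$-avoiding $L$-intersecting system, then $$|\mathcal{F}|\le\sum_{i=0}^{2s-1}\binom{n}{i}.$$
   Context: $L\subseteq\{0,\ldots,q-1\}$ is an interval in the modulo $q$ sense of size $s$ if $L$ is the set of residues in $\{0,\ldots,q-1\}$ of $a,a+1,\ldots,a+s-1$ for some integer $a$. For $L\subseteq\{0,\ldots,q-1\}$, $\mathcal{F}\subseteq2^{[n]}$ is $q$-modular $L$-intersecting if for all distinct $A,B\in\mathcal{F}$, $|A\cap B|\equiv\ell\pmod q$ for some $\ell\in L$, and $q$-modular $L$-avoiding if for every $A\in\mathcal{F}$, $|A|\not\equiv\ell\pmod q$ for all $\ell\in L$. *)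

From mathcomp Require Import all_boot.
Set Implicit Arguments. Unset Strict Implicit. Unset Printing Implicit Defensive.

Definition mod_interval (q s : nat) (L : {set 'I_q}) : Prop :=
  exists a : nat, forall x : 'I_q,
    (x \in L) = has (fun j => (a + j) %% q == nat_of_ord x) (iota 0 s).

Definition mod_L_intersecting (n q : nat) (L : {set 'I_q}) (F : {set {set 'I_n}}) : Prop :=
  forall A B, A \in F -> B \in F -> A != B ->
    exists2 l : 'I_q, l \in L & #|A :&: B| = nat_of_ord l %[mod q].

Definition mod_L_avoiding (n q : nat) (L : {set 'I_q}) (F : {set {set 'I_n}}) : Prop :=
  forall A, A \in F -> forall l : 'I_q, l \in L -> #|A| <> nat_of_ord l %[mod q].

(* A Frankl-Wilson rank argument in which the modular polynomial is replaced
   by p-adic valuations.  Write L = {a, ..., a + s - 1} mod p^2 and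
   k = (s - 1) %/ p.  There is a multiset I of fewer than 2s numbers below s
   in which each residue class mod p occurs at most k + 1 times, and exactly
   k + 1 times if it meets [0, s).  For f(u) = prod_(i in I) (u - a - i), the
   p-adic valuation of f(u) is therefore >= k + 2 when u mod p^2 lies in L
   (one extra factor from the i with i = u - a mod p^2) and <= k + 1
   otherwise.  So the matrix (f |A :&: B|)_(A, B in F) has diagonal entries of
   valuation <= k + 1 and off-diagonal entries of valuation >= k + 2, hence a
   nonzero determinant.  Since f has degree < 2s, f |A :&: B| is a
   combination of the indicators [S \subset B] with #|S| < 2s and
   coefficients depending on A, which bounds the rank of that matrix by the
   number of such S. *)

From mathcomp Require Import all_boot all_algebra fingroup perm zify.
Set Implicit Arguments. Unset Strict Implicit. Unset Printing Implicit Defensive.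
Import GRing.Theory.

Lemma count_mod_window p a b y : 0 < p ->
  count (fun i => a + i == y %[mod p]) (iota b p) = 1.
Proof.
move=> p_gt0.
have -> : count (fun i => a + i == y %[mod p]) (iota b p)
        = count (fun i => i == y %[mod p]) (iota (a + b) p).
  by rewrite iotaDl count_map.
elim: (a + b) => [|c IHc].
  rewrite (@eq_in_count _ _ (pred1 (y %% p))) => [|i]; last first.
    by rewrite mem_iota add0n => /= lt_ip; rewrite modn_small.
  by rewrite count_uniq_mem ?iota_uniq // mem_iota ltn_pmod.
case: p p_gt0 IHc => // p _.
have -> : iota c.+1 p.+1 = iota c.+1 p ++ [:: c.+1 + p].
  by rewrite -[p.+1]addn1 iotaD.
rewrite count_cat /= addn0 => <-.
by rewrite addnC addSnnS modnDr.
Qed.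

Lemma count_mod_iota_mul p a y k : 0 < p ->
  count (fun i => a + i == y %[mod p]) (iota 0 (k * p)) = k.
Proof.
move=> p_gt0; elim: k => [//|k IHk].
by rewrite mulSnr iotaD count_cat IHk count_mod_window // addn1.
Qed.

Lemma count_mod_iota_le p a b l y : 0 < p -> l <= p ->
  count (fun i => a + i == y %[mod p]) (iota b l) <= 1.
Proof.
move=> p_gt0 le_lp; rewrite -(count_mod_window a b y p_gt0) -(subnKC le_lp).
by rewrite iotaD count_cat leq_addr.
Qed.

Definition offsets p s := iota 0 (s.-1 %/ p * p) ++ iota (s - minn p s) (minn p s).

Section Offsets.
Variables p s : nat.
Hypotheses (p_gt0 : 0 < p) (s_gt0 : 0 < s).

Let s_divn : s.-1 = s.-1 %/ p * p + s.-1 %% p /\ s.-1 %% p < p.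
Proof. by rewrite -divn_eq ltn_pmod. Qed.

Lemma mem_offsets j : (j \in offsets p s) = (j < s).
Proof.
rewrite mem_cat !mem_iota /minn; case: (ltnP p s) => [lt_ps|le_sp];
  case: s_divn; set k := _ %/ p * p => ? ?; apply/idP/idP; lia.
Qed.

Lemma size_offsets : size (offsets p s) < 2 * s.
Proof.
rewrite size_cat !size_iota /minn; case: (ltnP p s) => [lt_ps|le_sp].
  by case: s_divn; set k := _ %/ p * p; lia.
by rewrite divn_small ?mul0n; lia.
Qed.

Lemma count_offsets_le a y :
  count (fun i => a + i == y %[mod p]) (offsets p s) <= (s.-1 %/ p).+1.
Proof.
rewrite count_cat count_mod_iota_mul // -addn1 leq_add2l.
by rewrite count_mod_iota_le ?geq_minl.
Qed.

Lemma count_offsets_ge a y j : j < s -> a + j == y %[mod p] ->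
  (s.-1 %/ p).+1 <= count (fun i => a + i == y %[mod p]) (offsets p s).
Proof.
move=> lt_js aj_y; rewrite count_cat count_mod_iota_mul // -addn1 leq_add2l /minn.
case: (ltnP p s) => [_|le_sp]; first by rewrite count_mod_window.
by rewrite subnn -has_count; apply/hasP; exists j; rewrite ?mem_iota.
Qed.

End Offsets.

Definition negmod q a i := q * a.+1 - (a + i).

Lemma negmod_gt0 q a i : i < q -> 0 < negmod q a i.
Proof.
move=> lt_iq; have : a <= q * a by rewrite leq_pmull //; lia.
by rewrite subn_gt0; lia.
Qed.

Lemma dvdn_add_negmod q a d u i : i < q -> d %| q ->
  (d %| u + negmod q a i) = (a + i == u %[mod d]).
Proof.
move=> lt_iq /dvdnP[k q_eq].
have : a <= q * a by rewrite leq_pmull //; lia.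
rewrite /dvdn -(mod0n d) -(eqn_modDr (a + i) _ 0) add0n /negmod q_eq => le_a_qa.
rewrite -addnA subnK; last by rewrite -q_eq; lia.
by rewrite mulnAC addnC modnMDl eq_sym.
Qed.

Lemma logn_prod p (I : eqType) (r : seq I) (F : I -> nat) :
  (forall i, i \in r -> 0 < F i) ->
  logn p (\prod_(i <- r) F i) = \sum_(i <- r) logn p (F i).
Proof.
elim: r => [|i r IHr] F_gt0; first by rewrite !big_nil logn1.
have F_gt0_r j : j \in r -> 0 < F j by move=> rj; rewrite F_gt0 // inE rj orbT.
by rewrite !big_cons lognM ?IHr ?F_gt0 ?mem_head // big_seq prodn_cond_gt0.
Qed.

Lemma dvdn_dvdn_sq_le_logn p x : prime p -> 0 < x ->
  (p %| x) + (p ^ 2 %| x) <= logn p x.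
Proof.
move=> p_pr x_gt0; rewrite -[p in p %| x]expn1 !pfactor_dvdn //.
by case: (logn p x) => [|[|l]].
Qed.

Lemma logn_le_dvdn p x : prime p -> 0 < x -> ~~ (p ^ 2 %| x) ->
  logn p x <= (p %| x).
Proof.
move=> p_pr x_gt0; rewrite pfactor_dvdn // -[p in p %| x]expn1 pfactor_dvdn //.
by case: (logn p x) => [|[|l]].
Qed.

(* f(u) = prod_(i <- offsets p s) (u - a - i) over nat: each factor is
   shifted by a multiple of p^2 to stay positive (see dvdn_add_negmod). *)
Definition window_shifts p a s := [seq negmod (p ^ 2) a i | i <- offsets p s].
Definition window_prod p a s u := \prod_(c <- window_shifts p a s) (u + c).

Lemma sum_nat_of_bool (I : Type) (r : seq I) (P : pred I) :
  \sum_(i <- r) (P i : nat) = count P r.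
Proof. by rewrite -sum1_count [RHS]big_mkcond. Qed.

Section WindowProd.
Variables p a s : nat.
Hypotheses (p_pr : prime p) (s_gt0 : 0 < s) (le_sq : s <= p ^ 2).

Let p_gt0 : 0 < p. Proof. exact: prime_gt0. Qed.

Let factor_gt0 u i : i \in offsets p s -> 0 < u + negmod (p ^ 2) a i.
Proof.
rewrite mem_offsets // addn_gt0 => lt_is.
by rewrite negmod_gt0 ?orbT // (leq_trans lt_is).
Qed.

Let dvdn_factor u d i : i \in offsets p s -> d %| p ^ 2 ->
  (d %| u + negmod (p ^ 2) a i) = (a + i == u %[mod d]).
Proof.
by rewrite mem_offsets // => lt_is; exact: dvdn_add_negmod (leq_trans lt_is le_sq).
Qed.

Let logn_window_prod u : logn p (window_prod p a s u) =
  \sum_(i <- offsets p s) logn p (u + negmod (p ^ 2) a i).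
Proof. by rewrite /window_prod big_map logn_prod // => i /factor_gt0. Qed.

Lemma window_prod_gt0 u : 0 < window_prod p a s u.
Proof. by rewrite /window_prod big_map big_seq prodn_cond_gt0 // => i /factor_gt0. Qed.

Let dvdn_p_q : p %| p ^ 2. Proof. by rewrite dvdn_exp. Qed.

Lemma logn_window_prod_in u j : j < s -> a + j == u %[mod p ^ 2] ->
  (s.-1 %/ p).+2 <= logn p (window_prod p a s u).
Proof.
move=> lt_js aj_u; rewrite logn_window_prod.
have aj_u_p : a + j == u %[mod p].
  by rewrite -(modn_dvdm (a + j) dvdn_p_q) -(modn_dvdm u dvdn_p_q) (eqP aj_u).
apply: (@leq_trans (\sum_(i <- offsets p s)
    ((a + i == u %[mod p]) + (a + i == u %[mod p ^ 2])))).
  rewrite big_split /= !sum_nat_of_bool -addn1.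
  apply: leq_add; first exact: count_offsets_ge aj_u_p.
  by rewrite -has_count; apply/hasP; exists j; rewrite ?(mem_offsets p_gt0 s_gt0).
rewrite big_seq [leqRHS]big_seq; apply: leq_sum => i iI.
by rewrite -!dvdn_factor // dvdn_dvdn_sq_le_logn ?factor_gt0.
Qed.

Lemma logn_window_prod_out u : (forall j, j < s -> a + j != u %[mod p ^ 2]) ->
  logn p (window_prod p a s u) <= (s.-1 %/ p).+1.
Proof.
move=> L_out; rewrite logn_window_prod.
apply: leq_trans _ (@count_offsets_le p s p_gt0 a u); rewrite -sum_nat_of_bool.
rewrite big_seq [leqRHS]big_seq; apply: leq_sum => i iI.
rewrite -dvdn_factor // logn_le_dvdn ?factor_gt0 // dvdn_factor // L_out //.
by rewrite -(mem_offsets p_gt0 s_gt0).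
Qed.

End WindowProd.

Lemma det_neq0_logn p m (X : 'I_m -> 'I_m -> nat) E : prime p ->
  (forall i j, 0 < X i j) -> (forall i, logn p (X i i) <= E) ->
  (forall i j, i != j -> E < logn p (X i j)) ->
  (\det (\matrix_(i, j) (X i j)%:R : 'M[int]_m) != 0)%R.
Proof.
move=> p_pr X_gt0 diag_le off_gt.
set V := \sum_i logn p (X i i).
have logn_diag : logn p (\prod_i X i i) = V by rewrite logn_prod.
have off_dvd (g : 'S_m) : g != 1%g -> p ^ V.+1 %| \prod_i X i (g i).
  move=> g_neq1; rewrite pfactor_dvdn ?prodn_gt0 // logn_prod //.
  have [i0 g_i0] : exists i, g i != i.
    apply/existsP; apply: contraR g_neq1; rewrite negb_exists => /forallP g_fix.
    by apply/eqP/permP => i; rewrite perm1; apply/eqP; rewrite -[_ == _]negbK g_fix.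
  apply: leq_trans (_ : \sum_i (logn p (X i i) + (g i != i)) <= _).
    by rewrite big_split /= -addn1 leq_add2l (bigD1 i0) //= g_i0.
  apply: leq_sum => i _; case: eqP => [->|/eqP g_i]; first by rewrite addn0.
  by rewrite addn1 (leq_ltn_trans (diag_le i)) // off_gt // eq_sym.
rewrite /determinant (bigD1 1%g) //= odd_perm1 expr0 mul1r.
under eq_bigr do rewrite mxE perm1.
rewrite -natr_prod addr_eq0; apply/negP => /eqP diag_eq.
have : (((\prod_i X i i)%N%:R : int) \in dvdz (p ^ V.+1)%N)%R.
  rewrite diag_eq rpredN rpred_sum // => g g_neq1; apply: dvdz_mull.
  under eq_bigr do rewrite mxE.
  by rewrite -natr_prod dvdzE natz !absz_nat off_dvd.
by rewrite dvdzE natz !absz_nat pfactor_dvdn ?prodn_gt0 // logn_diag ltnn.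
Qed.

Section SubsetExpansion.
Variables (T : finType) (R : pzSemiRingType).
Implicit Types (A S Y : {set T}) (cs : seq nat).
Local Open Scope ring_scope.

Fixpoint subset_coef cs A S : R :=
  if cs is c :: cs' then c%:R * subset_coef cs' A S +
    \sum_(x in A) \sum_(S' : {set T}) (x |: S' == S)%:R * subset_coef cs' A S'
  else (S == set0)%:R.

Lemma sum_subset_indicator Y S0 (r : R) :
  \sum_(S : {set T} | S \subset Y) (S0 == S)%:R * r = (S0 \subset Y)%:R * r.
Proof.
have [S0Y|S0NY] := boolP (S0 \subset Y).
  rewrite (bigD1 S0) //= eqxx mul1r big1 ?addr0 ?mul1r // => S /andP[_ neq_S].
  by rewrite eq_sym (negbTE neq_S) mul0r.
rewrite big1 ?mul0r // => S SY; case: eqP => [S0_eq|_]; last by rewrite mul0r.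
by move: S0NY; rewrite S0_eq SY.
Qed.

Lemma sum_subset_coef cs A Y :
  \sum_(S : {set T} | S \subset Y) subset_coef cs A S =
  (\prod_(c <- cs) (#|A :&: Y| + c))%:R.
Proof.
elim: cs => [|c cs IHcs] /=.
  rewrite big_nil; transitivity ((set0 \subset Y)%:R * (1 : R)).
    by rewrite -sum_subset_indicator; apply: eq_bigr => S _; rewrite mulr1 eq_sym.
  by rewrite sub0set mulr1.
rewrite big_cons natrM -IHcs big_split -mulr_sumr exchange_big /= natrD mulrDl addrC.
congr (_ + _).
under eq_bigr => x _ do rewrite exchange_big /=.
under eq_bigr => x _ do under eq_bigr => S' _ do
  rewrite sum_subset_indicator subUset sub1set.
have sum_in x :
    \sum_(S' : {set T}) ((x \in Y) && (S' \subset Y))%:R * subset_coef cs A S' =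
    (x \in Y)%:R * \sum_(S' : {set T} | S' \subset Y) subset_coef cs A S'.
  rewrite mulr_sumr [RHS]big_mkcond /=; apply: eq_bigr => S' _.
  by case: (x \in Y); case: (S' \subset Y); rewrite /= ?mul1r ?mul0r ?mulr0.
rewrite (eq_bigr _ (fun x _ => sum_in x)) -mulr_suml; congr (_ * _).
rewrite -sum1_card natr_sum big_mkcond [RHS]big_mkcond /=; apply: eq_bigr => x _.
by rewrite in_setI; case: (x \in A); case: (x \in Y).
Qed.

Lemma subset_coef_eq0 cs A S : (size cs < #|S|)%N -> subset_coef cs A S = 0.
Proof.
elim: cs S => [|c cs IHcs] S lt_cs_S /=.
  by case: eqP lt_cs_S => // ->; rewrite cards0.
rewrite IHcs ?mulr0 ?add0r; last exact: ltn_trans lt_cs_S.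
apply: big1 => x _; apply: big1 => S' _; case: eqP => [S_eq|_]; last by rewrite mul0r.
rewrite IHcs ?mulr0 //; move: lt_cs_S.
by rewrite -S_eq cardsU1; case: (x \in S') => /=; lia.
Qed.

End SubsetExpansion.

Lemma card_subsets_lt (T : finType) k :
  #|[set S : {set T} | #|S| < k]| = \sum_(0 <= i < k) 'C(#|T|, i).
Proof.
elim: k => [|k IHk]; first by rewrite big_geq // -sum1dep_card big_pred0.
rewrite big_nat_recr //= -IHk -card_draws -!sum1dep_card.
rewrite [LHS](bigID (fun S : {set T} => #|S| < k)) /=.
congr (_ + _); apply: eq_bigl => S.
  by case: (ltnP #|S| k) => lt_Sk; rewrite ?andbT ?andbF // ltnS ltnW.
by rewrite ltnS -leqNgt -eqn_leq.
Qed.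

Lemma card_le_intersection_det (T : finType) (F : {set {set T}}) (cs : seq nat) d :
  size cs < d ->
  (\det (\matrix_(i, j)
     (\prod_(c <- cs) (#|enum_val i :&: enum_val j| + c))%N%:R : 'M[int]_#|F|) != 0)%R ->
  #|F| <= \sum_(0 <= i < d) 'C(#|T|, i).
Proof.
move=> lt_cs_d det_neq0; set M := (\matrix_(i, j) _)%R in det_neq0.
pose small := [set S : {set T} | #|S| < d].
pose A (i : 'I_#|F|) : {set T} := enum_val i.
pose B (k : 'I_#|small|) : {set T} := enum_val k.
pose G : 'M[rat]_(#|F|, #|small|) := (\matrix_(i, k) subset_coef rat cs (A i) (B k))%R.
pose H : 'M[rat]_(#|small|, #|F|) := (\matrix_(k, j) (B k \subset A j)%:R)%R.
have M_GH : map_mx intr M = (G *m H)%R.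
  apply/matrixP => i j; rewrite /G /H !mxE natz.
  under [RHS]eq_bigr do rewrite !mxE.
  rewrite /B -(big_enum_val (fun S => subset_coef rat cs (A i) S * (S \subset A j)%:R)%R).
  rewrite [RHS]big_mkcond [RHS](eq_bigr (fun S : {set T} =>
    if S \subset A j then subset_coef rat cs (A i) S else 0)%R).
    by rewrite -[RHS]big_mkcond sum_subset_coef.
  move=> S _; rewrite inE; case: ltnP => [_|le_dS].
    by case: (S \subset _); rewrite ?mulr1 ?mulr0.
  by rewrite subset_coef_eq0 ?mul0r ?if_same // (leq_trans lt_cs_d).
have rank_M : \rank (map_mx (intr : int -> rat) M) = #|F|.
  by apply: mxrank_unit; rewrite unitmxE unitfE det_map_mx intr_eq0.
by rewrite -card_subsets_lt -rank_M M_GH (leq_trans (mxrankM_maxl G H)) ?rank_leq_col.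
Qed.

Lemma mod_interval_mem q s (L : {set 'I_q}) : mod_interval s L ->
  exists a, forall (l : 'I_q) v, v = l %[mod q] ->
    l \in L <-> exists2 j, j < s & a + j == v %[mod q].
Proof.
case=> a L_def; exists a => l v v_l; rewrite L_def v_l modn_small //.
split=> [/hasP[j]|[j lt_js aj]]; last by apply/hasP; exists j; rewrite ?mem_iota.
by rewrite mem_iota => /andP[_ lt_js]; exists j.
Qed.

Theorem mainTheorem16 (p n s : nat) (L : {set 'I_(p ^ 2)}) (F : {set {set 'I_n}}) :
  prime p -> 1 <= s <= p ^ 2 - 1 -> mod_interval s L ->
  mod_L_avoiding L F -> mod_L_intersecting L F ->
  #|F| <= \sum_(0 <= i < 2 * s) 'C(n, i).
Proof.
move=> p_pr /andP[s_gt0 le_s_q1] /mod_interval_mem[a L_mem] F_avoid F_int.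
have q_gt0 : 0 < p ^ 2 by rewrite expn_gt0 prime_gt0.
have le_sq : s <= p ^ 2 by lia.
suff : #|F| <= \sum_(0 <= i < 2 * s) 'C(#|'I_n|, i) by rewrite card_ord.
apply: (card_le_intersection_det (cs := window_shifts p a s)).
  by rewrite size_map; exact: size_offsets (prime_gt0 p_pr) s_gt0.
apply: (@det_neq0_logn p _ (fun i j => window_prod p a s #|enum_val i :&: enum_val j|)
  (s.-1 %/ p).+1 p_pr) => [i j|i|i j neq_ij]; first exact: window_prod_gt0.
- rewrite setIid; apply: logn_window_prod_out => // j lt_js; apply/negP => aj.
  pose l := Ordinal (ltn_pmod #|enum_val i| q_gt0).
  have size_l : #|enum_val i| = l %[mod p ^ 2] by rewrite modn_mod.
  have l_in : l \in L by apply/(L_mem l _ size_l); exists j.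
  exact: F_avoid (enum_valP i) l l_in size_l.
- have [|l l_in size_l] := F_int _ _ (enum_valP i) (enum_valP j).
    by rewrite (inj_eq enum_val_inj).
  by have /(L_mem l _ size_l)[k lt_ks] := l_in; apply: logn_window_prod_in.
Qed.
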